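(* Let $n\ge2$, $g,h\in H_n\rtimes S_n$ and $r\in\mathbb{N}$, and let $j^1,\dots,j^u$ be representatives of $I^c_r(g)$. If $x_1,x_2\in H_n$ both satisfy $x_1^{-1}gx_1=h$ and $x_2^{-1}gx_2=h$, then $\sum_{s=1}^u t_{j^s}(x_1)=\sum_{s=1}^u t_{j^s}(x_2)$.
   Context: $\mathbb{N}=\{1,2,\dots\}$, $X_n=\{1,\dots,n\}\times\mathbb{N}$, permutations act on the right. $H_n$ is the group of bijections $g$ of $X_n$ with $z_i(g)\in\mathbb{N}$, $t_i(g)\in\mathbb{Z}$ such that $(i,m)g=(i,m+t_i(g))$ for all $m\ge z_i(g)$. $S_n$ acts by $(i,m)\sigma=(i\sigma,m)$; $H_n\rtimes S_n\le\mathrm{Sym}(X_n)$ is generated by $H_n$ and these; each $g$ is uniquely $\omega_g\sigma_g$ with $\omega_g\in H_n$, $\sigma_g\in S_n$, $t_i(g):=t_i(\omega_g)$. $[i]_g$ is the orbit of $i$ under $\langle\sigma_g\rangle$, $|[i]_g|$ its size, $t_{[i]}(g)=\sum_{k\in[i]_g}t_k(g)$, $I^c(g)=\{i: t_{[i]}(g)=0\}$, and $I^c_r(g)=\{j\in I^c(g): |[j]_g|=r\}$. Representatives $j^1,\dots,j^u$ of $I^c_r(g)$ are elements such that $I^c_r(g)=[j^1]_g\sqcup\dots\sqcup[j^u]_g$ (disjoint union). *)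

From mathcomp Require Import all_boot all_order all_algebra all_fingroup.
Set Implicit Arguments. Unset Strict Implicit. Unset Printing Implicit Defensive.
Import GRing.Theory Num.Theory.

(* X_n = {1..n} x N, encoded as 'I_n * nat (both coordinates shifted by -1;
   this is an order-preserving relabelling, so nothing changes). *)
Definition X (n : nat) : Type := ('I_n * nat)%type.

Definition Hn_trans (n : nat) (w : X n -> X n) (t : 'I_n -> int) : Prop :=
  forall i : 'I_n, exists z : nat, forall m : nat, (z <= m)%N ->
    (w (i, m)).1 = i /\ ((w (i, m)).2%:Z = m%:Z + t i)%R.

Definition in_Hn (n : nat) (w : X n -> X n) : Prop :=
  bijective w /\ exists t : 'I_n -> int, Hn_trans w t.

Definition permX (n : nat) (s : {perm 'I_n}) (p : X n) : X n := (s p.1, p.2).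

(* g = w * s  (right actions: first w, then s), with w in H_n, s in S_n *)
Definition HS_decomp (n : nat) (g w : X n -> X n) (s : {perm 'I_n}) : Prop :=
  in_Hn w /\ forall p : X n, g p = permX s (w p).

Definition tclass (n : nat) (s : {perm 'I_n}) (t : 'I_n -> int) (i : 'I_n) : int :=
  (\sum_(k in porbit s i) t k)%R.

Definition Ic (n : nat) (s : {perm 'I_n}) (t : 'I_n -> int) : {set 'I_n} :=
  [set i | tclass s t i == 0%R].

Definition Icr (n : nat) (s : {perm 'I_n}) (t : 'I_n -> int) (r : nat) : {set 'I_n} :=
  [set j in Ic s t | #|porbit s j| == r].

Definition representatives (n : nat) (s : {perm 'I_n}) (A : {set 'I_n})
    (js : seq 'I_n) : Prop :=
  A = \bigcup_(j <- js) porbit s j /\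
  pairwise (fun a b => [disjoint porbit s a & porbit s b]) js.

(* Since x1 and x2 both conjugate g to h, c := x2^-1 x1 is an element of H_n
   commuting with g, with translation numbers t1 - t2.  Commuting with g, c
   permutes the set S of points of exact g-period r, and far out in row i the
   set S contains every point if i lies in I^c_r(g) and no point otherwise.
   A bijection of S that eventually translates row i by t_i moves as many
   points of S across a far-out cut in each direction, so the net flux
   sum_{i in I^c_r(g)} (t1 - t2)_i vanishes.  Finally t1 - t2 is constant on
   the sg-orbits, which all have size r, so that sum is r times
   sum_s (t1 - t2)(j^s). *)

From mathcomp Require Import all_boot all_order all_algebra all_fingroup zify.
Import GRing.Theory Num.Theory.
Set Implicit Arguments. Unset Strict Implicit.

Definition eventually (P : nat -> Prop) := exists z, forall m, (z <= m)%N -> P m.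

Lemma eventually_and (P Q : nat -> Prop) :
  eventually P -> eventually Q -> eventually (fun m => P m /\ Q m).
Proof.
move=> [zP hP] [zQ hQ]; exists (maxn zP zQ) => m; rewrite geq_max => /andP[mP mQ].
by split; [apply: hP | apply: hQ].
Qed.

Lemma eventually_all (I : finType) (P : I -> nat -> Prop) :
  (forall i, eventually (P i)) -> eventually (fun m => forall i, P i m).
Proof.
move=> hP; have [z hz] := fin_all_exists hP.
exists (\max_i z i)%N => m hm i; apply: hz.
exact: leq_trans (leq_bigmax (F := z) i) hm.
Qed.

Section Flux.

Variables (n : nat) (f : X n -> X n) (S : pred (X n)) (R : {set 'I_n}).
Variables (t : 'I_n -> int) (Z : nat).
Hypotheses (f_inj : injective f) (f_S : {homo f : p / S p}).
Hypothesis f_onto : forall q, S q -> exists2 p, S p & f p = q.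
Hypothesis S_row : forall i m, (Z <= m)%N -> S (i, m) = (i \in R).
Hypothesis f_row : forall i m, (Z <= m)%N ->
  (f (i, m)).1 = i /\ ((f (i, m)).2%:Z = m%:Z + t i)%R.

(* f is arbitrary only on the finitely many points below height Z, whose images
   lie at height at most W; above Z + T + W the cut at height N is crossed only
   by the rows in R, each shifted by t_i. *)
Let T := (\max_i `|t i|)%N.
Let W := (\max_(p : 'I_n * 'I_Z) (f (p.1, val p.2)).2)%N.
Let N := (Z + T + W).+1.
Let M := (N + T)%N.

Let abs_t_le i : (`|t i| <= T)%N.
Proof. exact: (@leq_bigmax _ (fun i => `|t i|%N)). Qed.

Let f_low_le i m : (m < Z)%N -> ((f (i, m)).2 <= W)%N.
Proof.
move=> mZ.
exact: (@leq_bigmax _ (fun p : 'I_n * 'I_Z => (f (p.1, val p.2)).2) (i, Ordinal mZ)).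
Qed.

Let window_forward p : S p -> (p.2 < N)%N -> ((f p).2%:Z < N%:Z + t (f p).1)%R.
Proof.
case: p => i m /= Sp mN; have := abs_t_le (f (i, m)).1.
case: (leqP Z m) => [Zm | mZ]; last by have := f_low_le i mZ; rewrite /N; lia.
have [-> ->] := f_row i Zm; lia.
Qed.

Let window_backward p : ((f p).2%:Z < N%:Z + t (f p).1)%R -> (p.2 < N)%N.
Proof.
case: p => i m /=; case: (leqP Z m) => [Zm | mZ]; last by rewrite /N; lia.
by have [-> ->] := f_row i Zm; lia.
Qed.

Let Nt i := `|(N%:Z + t i)%R|%N.

Let NtE i : ((Nt i)%:Z = N%:Z + t i)%R.
Proof. by have := abs_t_le i; rewrite /Nt /N; lia. Qed.

Let box := [seq (i, m) | i <- enum 'I_n, m <- iota 0 M].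

Let window (K : 'I_n -> nat) := [seq p <- box | S p && (p.2 < K p.1)%N].

Let mem_window K p : (forall i, K i <= M)%N ->
  (p \in window K) = S p && (p.2 < K p.1)%N.
Proof.
move=> KM; rewrite mem_filter; case: p => i m /=.
case: (S (i, m)) (ltnP m (K i)) => -[] //= mK.
apply/allpairsP; exists (i, m); rewrite mem_enum mem_iota /=.
by split=> //; apply: leq_trans mK (KM i).
Qed.

Let uniq_window K : uniq (window K).
Proof.
apply/filter_uniq/allpairs_uniq; rewrite ?enum_uniq ?iota_uniq //.
by move=> [? ?] [? ?] _ _.
Qed.

Let perm_window : perm_eq [seq f p | p <- window (fun=> N)] (window Nt).
Proof.
have NtM i : (Nt i <= M)%N by have := abs_t_le i; rewrite /Nt /M /N; lia.
have NM : (N <= M)%N by rewrite leq_addr.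
apply: uniq_perm; rewrite ?(map_inj_uniq f_inj) // => q.
rewrite mem_window //; apply/mapP/idP => [[p] | /andP[Sq qN]].
  rewrite mem_window // => /andP[Sp pN] ->.
  by rewrite f_S //= -ltz_nat NtE window_forward.
have [p Sp fpq] := f_onto Sq; exists p => //.
by rewrite mem_window // Sp window_backward // fpq -NtE ltz_nat.
Qed.

Let size_window K :
  size (window K) = (\sum_i count (fun m => S (i, m) && (m < K i)%N) (iota 0 M))%N.
Proof.
rewrite size_filter count_flatten sumnE !big_map -enumT big_enum /=.
by apply: eq_bigr => i _; rewrite count_map.
Qed.

Lemma count_row i K : (Z <= K <= M)%N ->
  count (fun m => S (i, m) && (m < K)%N) (iota 0 M)
  = (count (fun m => S (i, m)) (iota 0 Z) + (i \in R) * (K - Z))%N.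
Proof.
move=> /andP[ZK KM]; rewrite -(subnKC KM) iotaD count_cat add0n.
rewrite [X in (_ + X)%N](@eq_in_count _ _ pred0); last first.
  by move=> m; rewrite mem_iota => /andP[Km _]; rewrite ltnNge Km andbF.
rewrite count_pred0 addn0 (@eq_in_count _ _ (fun m => S (i, m))); last first.
  by move=> m; rewrite mem_iota => /andP[_ mK]; rewrite mK andbT.
rewrite -{1}(subnKC ZK) iotaD count_cat add0n; congr addn.
rewrite (@eq_in_count _ _ (fun=> i \in R)); last first.
  by move=> m; rewrite mem_iota => /andP[Zm _]; rewrite S_row.
case: (i \in R); last by rewrite mul0n; elim: iota.
by rewrite mul1n -[RHS](size_iota Z); elim: iota => //= m s ->.
Qed.

Lemma flux_eq0_beyond : (\sum_(i in R) t i = 0)%R.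
Proof.
have ZN : (Z <= N)%N by rewrite /N; lia.
have ZNt i : (Z <= Nt i <= M)%N by have := abs_t_le i; rewrite /Nt /M /N; lia.
have := perm_size perm_window; rewrite size_map !size_window.
under eq_bigr do rewrite count_row ?ZN ?leq_addr //.
under [in RHS]eq_bigr do rewrite count_row ?ZNt //.
rewrite !big_split /= => /eqP; rewrite eqn_add2l => /eqP /(congr1 Posz).
rewrite !(big_morph Posz PoszD (erefl (Posz 0))) => /eqP.
rewrite eq_sym -subr_eq0 -sumrB => /eqP sum0.
rewrite big_mkcond -[RHS]sum0; apply: eq_bigr => i _ /=.
by have := NtE i; have := ZNt i; case: (i \in R); lia.
Qed.

End Flux.

Lemma flux_eq0 n (f : X n -> X n) (S : pred (X n)) (R : {set 'I_n}) (t : 'I_n -> int) :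
  injective f -> {homo f : p / S p} -> (forall q, S q -> exists2 p, S p & f p = q) ->
  (forall i, eventually (fun m => S (i, m) = (i \in R))) -> Hn_trans f t ->
  (\sum_(i in R) t i = 0)%R.
Proof.
move=> f_inj f_S f_onto S_row f_row.
have [Z hZ] := eventually_all (fun i => eventually_and (S_row i) (f_row i)).
by apply: (flux_eq0_beyond f_inj f_S f_onto) => i m /hZ /(_ i) [].
Qed.

Definition shifts_eventually n (f : X n -> X n) (s : 'I_n -> 'I_n) (t : 'I_n -> int) :=
  forall i, eventually (fun m => (f (i, m)).1 = s i /\ ((f (i, m)).2%:Z = m%:Z + t i)%R).

Section ShiftsEventually.

Variable n : nat.
Implicit Types (f g : X n -> X n) (s : 'I_n -> 'I_n) (t : 'I_n -> int).

Lemma shifts_eventually_comp f g s1 s2 t1 t2 :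
  shifts_eventually f s1 t1 -> shifts_eventually g s2 t2 ->
  shifts_eventually (g \o f) (s2 \o s1) (fun i => t1 i + t2 (s1 i))%R.
Proof.
move=> hf hg i; have [z1 h1] := hf i; have [z2 h2] := hg (s1 i).
exists (z1 + z2 + `|t1 i|)%N => m hm.
have [e1 e2] := h1 m ltac:(lia).
have [e3 e4] := h2 (f (i, m)).2 ltac:(lia).
by rewrite /= [f (i, m)]surjective_pairing e1 in e3 e4 *; rewrite e3 e4 e2 addrA.
Qed.

Lemma shifts_eventually_iter g s t k : shifts_eventually g s t ->
  shifts_eventually (iter k g) (iter k s) (fun i => \sum_(l < k) t (iter l s i))%R.
Proof.
move=> hg; elim: k => [|k IH] i; first by exists 0%N => m _; rewrite big_ord0 addr0.
have [z h] := shifts_eventually_comp IH hg i; exists z => m /h[e1 e2].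
by rewrite /= e1 e2 big_ord_recr.
Qed.

Lemma shifts_eventually_inj f1 f2 s1 s2 t1 t2 : f1 =1 f2 ->
  shifts_eventually f1 s1 t1 -> shifts_eventually f2 s2 t2 -> t1 =1 t2.
Proof.
move=> ef h1 h2 i; have [z hz] := eventually_and (h1 i) (h2 i).
by have [[_ e1] [_ e2]] := hz z (leqnn z); move: e2; rewrite -ef e1; lia.
Qed.

Lemma Hn_trans_cancel f f' t : Hn_trans f t -> cancel f f' -> Hn_trans f' (fun i => - t i)%R.
Proof.
move=> hf fK i; have [z hz] := hf i; exists (z + `|t i|)%N => m hm.
pose m0 := `|(m%:Z - t i)%R|%N.
have [e1 e2] := hz m0 ltac:(rewrite /m0; lia).
have -> : (i, m) = f (i, m0).
  by rewrite [f _]surjective_pairing e1; congr pair; move: e2; rewrite /m0; lia.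
by rewrite fK /=; split=> //; rewrite /m0; lia.
Qed.

Lemma HS_decomp_shifts g w (s : {perm 'I_n}) t :
  HS_decomp g w s -> Hn_trans w t -> shifts_eventually g s t.
Proof.
move=> [_ gE] hw i; have [z hz] := hw i; exists z => m /hz[e1 e2].
by rewrite gE /permX /= e1.
Qed.

End ShiftsEventually.

Section PermOrbit.

Variables (T : finType) (s : {perm T}) (x : T).
Let o := #|porbit s x|.

Let porbit_gt0 : (0 < o)%N.
Proof. by rewrite lt0n card_porbit_neq0. Qed.

Lemma iter_mul_porbit q : iter (q * o) s x = x.
Proof. by elim: q => // q IH; rewrite mulSn iterD IH iter_porbit. Qed.

Lemma iter_porbit_eq k : (iter k s x == x) = (o %| k)%N.
Proof.
rewrite {1}(divn_eq k o) addnC iterD iter_mul_porbit /dvdn.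
have := nth_uniq x _ _ (uniq_traject_porbit s x).
rewrite size_traject => /(_ (k %% o) 0 (ltn_pmod k porbit_gt0) porbit_gt0).
by rewrite !nth_traject ?ltn_pmod.
Qed.

Lemma sum_porbit_iter (V : nmodType) (F : T -> V) :
  (\sum_(y in porbit s x) F y = \sum_(l < o) F (iter l s x))%R.
Proof.
rewrite (eq_bigl _ _ (porbit_traject s x)) -big_uniq ?uniq_traject_porbit //=.
rewrite -/o; elim: o => [|k IH]; first by rewrite big_nil big_ord0.
by rewrite trajectSr -cats1 big_cat /= IH big_ord_recr big_seq1.
Qed.

Lemma sum_iter_mul_porbit (V : nmodType) (F : T -> V) q :
  (\sum_(l < q * o) F (iter l s x) = (\sum_(l < o) F (iter l s x)) *+ q)%R.
Proof.
elim: q => [|q IH]; first by rewrite big_ord0.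
rewrite mulSn big_split_ord /= mulrS -IH; congr (_ + _)%R.
by apply: eq_bigr => l _; rewrite addnC iterD iter_porbit.
Qed.

End PermOrbit.

Definition returns_after n (s : {perm 'I_n}) (t : 'I_n -> int) (i : 'I_n) (k : nat) :=
  (iter k s i == i) && (\sum_(l < k) t (iter l s i) == 0)%R.

Lemma returns_afterE n (s : {perm 'I_n}) t i k : (0 < k)%N ->
  returns_after s t i k = (#|porbit s i| %| k)%N && (tclass s t i == 0)%R.
Proof.
rewrite /returns_after iter_porbit_eq; have [/dvdnP[q ->] | //] := boolP (_ %| _)%N.
rewrite muln_gt0 => /andP[q_gt0 _].
by rewrite sum_iter_mul_porbit -sum_porbit_iter mulrn_eq0 eqn0Ngt q_gt0.
Qed.

Lemma first_return_Icr n (s : {perm 'I_n}) t i r : (0 < r)%N ->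
  returns_after s t i r && [forall k : 'I_r, (0 < k)%N ==> ~~ returns_after s t i k]
  = (i \in Icr s t r).
Proof.
move=> r_gt0; rewrite !inE returns_afterE //.
have o_gt0 : (0 < #|porbit s i|)%N by rewrite lt0n card_porbit_neq0.
have [tc0 | ] := boolP (tclass s t i == 0)%R; rewrite ?andbF // !andbT.
apply/andP/eqP => [[/dvdn_leq o_le /forallP first] | <-].
  apply/eqP; rewrite eqn_leq o_le // leqNgt; apply/negP => o_lt.
  by have := first (Ordinal o_lt); rewrite /= o_gt0 returns_afterE // dvdnn tc0.
split=> //; apply/forallP => -[k /= k_lt]; apply/implyP => k_gt0.
by rewrite returns_afterE // tc0 andbT; apply/negP => /(dvdn_leq k_gt0); rewrite leqNgt k_lt.
Qed.

Definition exact_period (T : eqType) (g : T -> T) (r : nat) (p : T) :=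
  (iter r g p == p) && [forall k : 'I_r, (0 < k)%N ==> (iter k g p != p)].

Lemma exact_period_comm (T : eqType) (c g : T -> T) r p :
  injective c -> (forall p, c (g p) = g (c p)) ->
  exact_period g r (c p) = exact_period g r p.
Proof.
move=> c_inj cg; have iter_c k : iter k g (c p) = c (iter k g p).
  by elim: k => //= k ->; rewrite cg.
rewrite /exact_period iter_c (inj_eq c_inj); congr andb.
by apply: eq_forallb => k; rewrite iter_c (inj_eq c_inj).
Qed.

Lemma exact_period_row n (g : X n -> X n) (s : {perm 'I_n}) t r :
  (0 < r)%N -> shifts_eventually g s t ->
  forall i, eventually (fun m => exact_period g r (i, m) = (i \in Icr s t r)).
Proof.
move=> r_gt0 hg i.
have [z hz] := eventually_all (I := 'I_r.+1) (fun k => shifts_eventually_iter k hg i).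
exists z => m /hz iter_row; rewrite -first_return_Icr //.
have returnsE k : (k <= r)%N -> (iter k g (i, m) == (i, m)) = returns_after s t i k.
  rewrite -ltnS => k_lt; have [e1 e2] := iter_row (Ordinal k_lt).
  rewrite [iter k g _]surjective_pairing xpair_eqE e1; congr andb.
  by apply/eqP/eqP; move: e2 => /=; lia.
rewrite /exact_period returnsE //; congr andb; apply: eq_forallb => k.
by rewrite returnsE // ltnW.
Qed.

Lemma sum_bigcup_disjoint (T J : finType) (V : nmodType)
    (A : J -> {set T}) (F : T -> V) (js : seq J) :
  pairwise (fun a b => [disjoint A a & A b]) js ->
  (\sum_(x in \bigcup_(j <- js) A j) F x = \sum_(j <- js) \sum_(x in A j) F x)%R.
Proof.
elim: js => [|a js IH]; first by rewrite !big_nil big_set0.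
rewrite pairwise_cons => /andP[/allP disj_a /IH {}IH].
rewrite !big_cons -IH (eq_bigl [predU A a & \bigcup_(j <- js) A j]) => [|x]; last first.
  by rewrite !inE.
rewrite bigU // bigcup_seq; exact: bigcup_disjoint.
Qed.

Lemma sum_representatives n (s : {perm 'I_n}) (A : {set 'I_n}) js r
    (V : nmodType) (F : 'I_n -> V) :
  representatives s A js -> {in A, forall i, #|porbit s i| = r} ->
  (forall i, F (s i) = F i) ->
  (\sum_(i in A) F i = (\sum_(j <- js) F j) *+ r)%R.
Proof.
move=> [-> disj] orbit_r Fs; rewrite sum_bigcup_disjoint // -sumrMnl.
apply: eq_big_seq => j j_js.
have jA : j \in \bigcup_(j <- js) porbit s j.
  by rewrite bigcup_seq; apply/bigcupP; exists j => //; exact: porbit_id.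
rewrite -(orbit_r j jA) -sumr_const; apply: eq_bigr => _ /porbitP[k ->].
by rewrite perm.permX; elim: k => //= k <-.
Qed.

Theorem lemma4p22 (n : nat) (hn : (2 <= n)%N)
  (g h : X n -> X n)
  (wg : X n -> X n) (sg : {perm 'I_n}) (Hg : HS_decomp g wg sg)
  (wh : X n -> X n) (sh : {perm 'I_n}) (Hh : HS_decomp h wh sh)
  (tg : 'I_n -> int) (Htg : Hn_trans wg tg)
  (r : nat) (hr : (0 < r)%N)
  (js : seq 'I_n) (Hjs : representatives sg (Icr sg tg r) js)
  (x1 x2 : X n -> X n) (Hx1 : in_Hn x1) (Hx2 : in_Hn x2)
  (t1 t2 : 'I_n -> int) (Ht1 : Hn_trans x1 t1) (Ht2 : Hn_trans x2 t2)
  (Hc1 : forall p : X n, x1 (g p) = h (x1 p))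
  (Hc2 : forall p : X n, x2 (g p) = h (x2 p)) :
  (\sum_(j <- js) t1 j = \sum_(j <- js) t2 j)%R.
Proof.
have g_shift := HS_decomp_shifts Hg Htg.
have [[[x1' x1K x1K'] _] [[x2' x2K x2K'] _]] := (Hx1, Hx2).
pose c := x2' \o x1; pose tc i := (t1 i - t2 i)%R.
have c_shift : Hn_trans c tc := shifts_eventually_comp Ht1 (Hn_trans_cancel Ht2 x2K).
have c_inj : injective c by apply: inj_comp; apply: can_inj; eassumption.
have cK : cancel (x1' \o x2) c by move=> q; rewrite /c /= x1K' x2K.
have cg p : c (g p) = g (c p) by rewrite /c /= Hc1 -{1}(x2K' (x1 p)) -Hc2 x2K.
have tc_sg i : tc (sg i) = tc i.
  have := shifts_eventually_inj (fun p => esym (cg p))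
    (shifts_eventually_comp c_shift g_shift) (shifts_eventually_comp g_shift c_shift) i.
  by rewrite /= addrC => /addrI.
have orbit_r : {in Icr sg tg r, forall i, #|porbit sg i| = r}.
  by move=> i; rewrite inE => /andP[_ /eqP].
have S_onto q : exact_period g r q -> exists2 p, exact_period g r p & c p = q.
  by exists ((x1' \o x2) q); rewrite ?cK // -(exact_period_comm _ _ c_inj cg) cK.
have S_homo : {homo c : p / exact_period g r p} by move=> p; rewrite exact_period_comm.
have := flux_eq0 c_inj S_homo S_onto (exact_period_row hr g_shift) c_shift.
rewrite (sum_representatives Hjs orbit_r tc_sg) => /eqP.
by rewrite mulrn_eq0 eqn0Ngt hr sumrB subr_eq0 => /eqP.
Qed.
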